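(* Let $\mathcal{B}$ be a front on $\mathbb{N}$. There is a Borel map $S:2^{\mathcal{B}}\times[\mathbb{N}]^{\omega}\to[\mathbb{N}]^{\omega}$ such that for every infinite $x\subseteq\mathbb{N}$ and every $\mathcal{F}\subseteq\mathcal{B}$, $S(\mathcal{F},x)$ is an infinite subset of $x$ satisfying $[S(\mathcal{F},x)]^{<\omega}\cap\mathcal{B}\subseteq\mathcal{F}$ or $[S(\mathcal{F},x)]^{<\omega}\cap\mathcal{F}=\emptyset$.
   Context: For finite $s$ and $t\subseteq\mathbb{N}$, $s\sqsubseteq t$ means $s=t\cap\{0,\dots,n\}$ for some $n$. A front on $\mathbb{N}$ is a family $\mathcal{B}\subseteq[\mathbb{N}]^{<\omega}$ of pairwise $\sqsubseteq$-incomparable sets such that every infinite $y\subseteq\mathbb{N}$ has an initial segment in $\mathcal{B}$. $[\mathbb{N}]^\omega$ is the space of infinite subsets of $\mathbb{N}$ (as a subspace of $2^{\mathbb{N}}$), and $2^{\mathcal{B}}$ is the Cantor space of subsets of $\mathcal{B}$. *)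

From mathcomp Require Import all_boot.
Set Implicit Arguments. Unset Strict Implicit. Unset Printing Implicit Defensive.

(* Subsets of nat are represented by their characteristic functions nat -> bool.
   Finite subsets of nat ([N]^{<omega}) are represented canonically by strictly
   increasing lists (sorted ltn). *)

Definition fin_set (s : seq nat) : Prop := sorted ltn s.

Definition infinite_set (x : nat -> bool) : Prop :=
  forall n, exists m, n <= m /\ x m.

Definition init_seg (s t : seq nat) : Prop :=
  exists n, forall k, (k \in s) = (k < n) && (k \in t).

Definition init_seg_of (s : seq nat) (y : nat -> bool) : Prop :=
  exists n, forall k, (k \in s) = (k < n) && y k.

Definition front (B : seq nat -> Prop) : Prop :=
  (forall s, B s -> fin_set s) /\
  (forall s t, B s -> B t -> init_seg s t -> s = t) /\
  (forall y, infinite_set y -> exists s, B s /\ init_seg_of s y).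

(* Borel sets of the product space I -> bool (I countable in our uses):
   the sigma-algebra generated by the subbasic cylinders {f | f i = b}. *)
Inductive borel {I : Type} : ((I -> bool) -> Prop) -> Prop :=
| borel_cyl (i : I) (b : bool) : borel (fun f => f i = b)
| borel_compl (A : (I -> bool) -> Prop) : borel A -> borel (fun f => ~ A f)
| borel_union (A : nat -> (I -> bool) -> Prop) :
    (forall n, borel (A n)) -> borel (fun f => exists n, A n f)
| borel_ext (A C : (I -> bool) -> Prop) :
    borel A -> (forall f, A f <-> C f) -> borel C.

(* A map S : 2^{seq nat} x 2^N -> 2^N is Borel (jointly), identifying the
   product 2^{seq nat} x 2^N with 2^{seq nat + nat}. *)
Definition borel_map2
  (S : (seq nat -> bool) -> (nat -> bool) -> (nat -> bool)) : Prop :=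
  forall A : (nat -> bool) -> Prop, borel A ->
    borel (fun g : (seq nat + nat) -> bool =>
             A (S (fun s => g (inl s)) (fun n => g (inr n)))).

From mathcomp Require Import all_boot.
From Stdlib Require Import Classical ClassicalEpsilon FunctionalExtensionality.
Set Implicit Arguments. Unset Strict Implicit. Unset Printing Implicit Defensive.

(* Call s homogenizable if, in a Borel way, every infinite x can be shrunk to
   an infinite Y and assigned a colour c such that each t = s ++ u in B with
   u inside Y satisfies F t = c.  Sequences with an initial segment in B are
   trivially homogenizable, since the front admits no extension of them.  If
   s is not in B and every one-point extension s ++ [n] is homogenizable, a
   fusion along the diagonal (at stage n, shrink the part above n with the
   homogenizer of s ++ [n]) yields a diagonal set on which the colour seen
   from a point n depends only on n; the diagonal points whose colour is the
   one taken infinitely often homogenize s.  Hence a non-homogenizable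
   sequence would have a non-homogenizable one-point extension; iterating
   gives an increasing chain whose union has an initial segment in B, which
   is an initial segment of some member of the chain, a contradiction.  The
   empty sequence is therefore homogenizable, and its homogenizer is S. *)

Definition borelb {I : Type} (f : (I -> bool) -> bool) := borel (fun g => f g).

Section BorelClosure.
Variable I : Type.
Implicit Types (A C : (I -> bool) -> Prop) (f h : (I -> bool) -> bool).

Lemma borel_preimage (J : Type) A (Phi : (J -> bool) -> I -> bool) :
  borel A -> (forall i, borel (fun g => Phi g i = true)) ->
  borel (fun g => A (Phi g)).
Proof.
move=> hA hPhi; elim: hA => [i [] | A' _ IH | A' _ IH | A' C' _ IH eqAC].
- exact: hPhi.
- apply: (borel_ext (borel_compl (hPhi i))) => g.
  by case: (Phi g i); split=> // nP; exfalso; apply: nP.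
- exact: borel_compl.
- exact: (borel_union IH).
- by apply: (borel_ext IH) => g; apply: eqAC.
Qed.

Lemma borelU A C : borel A -> borel C -> borel (fun g => A g \/ C g).
Proof.
move=> hA hC; apply: (@borel_ext _ (fun g => exists n, (if n is 0 then A else C) g)).
  by apply: borel_union; case.
by move=> g; split=> [[[|n]] | [] ]; [left | right | exists 0 | exists 1].
Qed.

Lemma borelI A C : borel A -> borel C -> borel (fun g => A g /\ C g).
Proof.
move=> hA hC; apply: (borel_ext (borel_compl (borelU (borel_compl hA) (borel_compl hC)))).
by move=> g; split=> [nAC | [Af Cf] []//]; split; apply: NNPP => ?; apply: nAC; [left | right].
Qed.

Lemma borel_forall (A : nat -> (I -> bool) -> Prop) :
  (forall n, borel (A n)) -> borel (fun g => forall n, A n g).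
Proof.
move=> hA; apply: (borel_ext (borel_compl (borel_union (fun n => borel_compl (hA n))))).
by move=> g; split=> [nA n | hAf [n]]; [apply: NNPP => ?; apply: nA; exists n | apply].
Qed.

Lemma borelb_cyl (i : I) : borelb (fun g => g i).
Proof. exact: borel_cyl. Qed.

Lemma borelb_const (i0 : I) b : borelb (fun _ : I -> bool => b).
Proof.
have hT : borelb (fun _ : I -> bool => true).
  apply: (borel_ext (borelU (borel_cyl i0 true) (borel_compl (borel_cyl i0 true)))).
  by move=> g; split=> // _; case: (g i0); [left | right].
case: b => //; apply: (borel_ext (borel_compl hT)) => g; by split.
Qed.

Lemma borelb_neg f : borelb f -> borelb (fun g => ~~ f g).
Proof. by move=> hf; apply: (borel_ext (borel_compl hf)) => g; case: (f g); split. Qed.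

Lemma borelb_and f h : borelb f -> borelb h -> borelb (fun g => f g && h g).
Proof.
by move=> hf hh; apply: (borel_ext (borelI hf hh)) => g; case: (f g) (h g) => -[]; split=> //; case.
Qed.

Lemma borelb_or f h : borelb f -> borelb h -> borelb (fun g => f g || h g).
Proof.
move=> hf hh; apply: (borel_ext (borelU hf hh)) => g.
by case: (f g) (h g) => -[]; split=> //; by [left | right | case].
Qed.

Lemma borelb_if c f h : borelb c -> borelb f -> borelb h ->
  borelb (fun g => if c g then f g else h g).
Proof.
move=> hc hf hh; apply: (borel_ext (borelb_or (borelb_and hc hf) (borelb_and (borelb_neg hc) hh))).
by move=> g; case: (c g) (f g) (h g) => -[] -[]; split.
Qed.

Lemma borelb_eq f h : borelb f -> borelb h -> borelb (fun g => f g == h g).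
Proof.
move=> hf hh; apply: (borel_ext (borelb_if hf hh (borelb_neg hh))) => g.
by case: (f g) (h g) => -[].
Qed.

Lemma borelb_comp (J : Type) (Phi : (J -> bool) -> I -> bool) h :
  (forall i, borelb (fun g => Phi g i)) -> borelb h -> borelb (fun g => h (Phi g)).
Proof. by move=> hPhi hh; exact: (borel_preimage hh hPhi). Qed.

Definition asbool (P : Prop) : bool :=
  if excluded_middle_informative P then true else false.

Lemma asboolP (P : Prop) : reflect P (asbool P).
Proof. by rewrite /asbool; case: excluded_middle_informative => h; constructor. Qed.

Lemma borelb_asbool A : borel A -> borelb (fun g => asbool (A g)).
Proof. by move=> hA; apply: (borel_ext hA) => g; split=> /asboolP. Qed.

End BorelClosure.

Definition above (s : seq nat) (n : nat) : bool := all (ltn^~ n) s.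

Lemma above_bigmax s : above s (\max_(a <- s) a).+1.
Proof. by apply/allP => a a_s /=; rewrite ltnS (leq_bigmax_seq a a_s). Qed.

Lemma above_leq s m n : above s m -> m <= n -> above s n.
Proof. by move=> /allP sm mn; apply/allP => a /sm /leq_trans; apply. Qed.

Lemma sorted_cat_ltn s u a b : sorted ltn (s ++ u) -> a \in s -> b \in u -> a < b.
Proof.
rewrite sorted_pairwise; last exact: ltn_trans.
by rewrite pairwise_cat => /and3P[/allrelP su _ _]; apply: su.
Qed.

Lemma init_seg_refl s : init_seg s s.
Proof.
exists (\max_(a <- s) a).+1 => k; case: (boolP (k \in s)) => [k_s|]; last by rewrite andbF.
by have /= -> := allP (above_bigmax s) k k_s.
Qed.

Lemma init_seg_trans a b c : init_seg a b -> init_seg b c -> init_seg a c.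
Proof.
move=> [m ab] [n bc]; exists (minn m n) => k.
by rewrite ab bc leq_min andbA.
Qed.

Lemma init_seg_subset a b : init_seg a b -> {subset a <= b}.
Proof. by move=> [n ab] k; rewrite ab => /andP[]. Qed.

Lemma init_seg_cat s u : sorted ltn (s ++ u) -> init_seg s (s ++ u).
Proof.
move=> su_sorted; exists (head (\max_(a <- s) a).+1 u) => k.
rewrite mem_cat; case: (boolP (k \in s)) => [k_s | k_s] /=.
  case: u su_sorted => [_ | b u su_sorted] /=; first by have /= -> := allP (above_bigmax s) k k_s.
  by rewrite (sorted_cat_ltn su_sorted k_s (mem_head b u)).
case: u su_sorted => [|b u /cat_sorted2[_ bu_sorted]] /=; first by rewrite andbF.
rewrite in_cons; case: eqP => [->|_ /=]; first by rewrite ltnn.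
case: (boolP (k \in u)) => [k_u | _]; last by rewrite andbF.
by rewrite ltnNge (ltnW (sorted_cat_ltn (s := [:: b]) bu_sorted (mem_head b [::]) k_u)).
Qed.

Lemma front_prefix_cat B b s u : front B -> B b -> init_seg b s ->
  sorted ltn (s ++ u) -> B (s ++ u) -> u = [::].
Proof.
move=> [_ [B_antichain _]] Bb b_s su_sorted Bsu.
have b_su : b = s ++ u.
  exact: B_antichain Bb Bsu (init_seg_trans b_s (init_seg_cat su_sorted)).
case: u b_su su_sorted {Bsu} => [//| a u] b_su su_sorted.
have a_s : a \in s by apply: init_seg_subset b_s _ _; rewrite b_su mem_cat mem_head orbT.
by have := sorted_cat_ltn su_sorted a_s (mem_head a u); rewrite ltnn.
Qed.

(* A pair (F, x) is coded as one point of 2^(seq nat + nat), as in [borel_map2]. *)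
Definition code := seq nat + nat -> bool.
Definition family_of (g : code) (s : seq nat) : bool := g (inl s).
Definition points_of (g : code) (n : nat) : bool := g (inr n).
Definition with_points (g : code) (x : nat -> bool) : code :=
  fun z => if z is inr n then x n else g z.

Lemma borelb_with_points (x : code -> nat -> bool) :
  (forall n, borelb (fun g => x g n)) -> forall z, borelb (fun g => with_points g (x g) z).
Proof. by move=> hx [t|n]; [exact: borelb_cyl | exact: hx]. Qed.

Definition homogenizes (B : seq nat -> Prop) (s : seq nat)
    (Y : code -> nat -> bool) (c : code -> bool) :=
  (forall g k, Y g k -> points_of g k) /\
  forall g, infinite_set (points_of g) ->
    infinite_set (Y g) /\
    forall u, sorted ltn (s ++ u) -> B (s ++ u) -> (forall k, k \in u -> Y g k) ->
      family_of g (s ++ u) = c g.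

Definition homogenizable (B : seq nat -> Prop) (s : seq nat) :=
  exists Y c, [/\ forall k, borelb (fun g => Y g k), borelb c & homogenizes B s Y c].

Lemma homogenizable_front_prefix B s : front B -> (exists2 b, B b & init_seg b s) ->
  homogenizable B s.
Proof.
move=> hB [b Bb b_s]; exists points_of, (family_of^~ s).
split=> [k | | ]; [exact: borelb_cyl | exact: borelb_cyl | split=> // g g_inf].
split=> // u su_sorted Bsu _.
by rewrite (front_prefix_cat hB Bb b_s su_sorted Bsu) cats0.
Qed.

Section Fusion.
Variables (B : seq nat -> Prop) (s : seq nat).
Variables (Y : nat -> code -> nat -> bool) (c : nat -> code -> bool).
Hypothesis Y_borel : forall n k, borelb (fun g => Y n g k).
Hypothesis c_borel : forall n, borelb (c n).
Hypothesis Y_homogenizes : forall n, above s n -> homogenizes B (rcons s n) (Y n) (c n).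

(* Stage m.+1 keeps everything up to m and, if m survived stage m, shrinks the
   part above m with the homogenizer of s ++ [m]. *)
Fixpoint fusion (n : nat) (g : code) : nat -> bool :=
  if n is m.+1 then
    let z := fusion m g in
    fun k => if (m < k) && z m then Y m (with_points g (fun j => z j && (m < j))) k else z k
  else fun k => points_of g k && above s k.

Definition stage_input (m : nat) (g : code) : code :=
  with_points g (fun j => fusion m g j && (m < j)).

Lemma fusionS m g k : fusion m.+1 g k =
  if (m < k) && fusion m g m then Y m (stage_input m g) k else fusion m g k.
Proof. by []. Qed.

Lemma borelb_fusion n k : borelb (fun g => fusion n g k).
Proof.
have const b : borelb (fun _ : code => b) by apply: borelb_const (inr 0) b.
elim: n k => [|m IH] k; first exact: borelb_and (borelb_cyl _) (const _).
apply: borelb_if; [exact: borelb_and (const _) (IH m) | | exact: IH].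
apply: (borelb_comp (h := fun g => Y m g k)) (Y_borel m k).
by apply: borelb_with_points => j; apply: borelb_and (IH j) (const _).
Qed.

Lemma fusion_subset0 n g k : fusion n g k -> fusion 0 g k.
Proof.
elim: n k => [//| m IH] k; rewrite fusionS.
case: ifP => [/andP[_ /IH /andP[_ s_m]] | _]; last exact: IH.
by move/((Y_homogenizes s_m).1) => /andP[/IH].
Qed.

Lemma fusion_above n g k : fusion n g k -> above s k.
Proof. by move/fusion_subset0 => /andP[]. Qed.

Lemma fusionS_subset m g k : fusion m.+1 g k -> fusion m g k.
Proof.
rewrite fusionS; case: ifP => // /andP[_ /fusion_above s_m].
by move/((Y_homogenizes s_m).1) => /andP[].
Qed.

Lemma fusion_subset i j g k : i <= j -> fusion j g k -> fusion i g k.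
Proof.
move=> ij; apply: (@homo_leq _ (fusion^~ g) (fun x y => forall k, y k -> x k)) ij k => //.
- by move=> y x z xy yz k /yz /xy.
- by move=> m; apply: fusionS_subset.
Qed.

Lemma fusion_const N d g : (forall i, N <= i < N + d -> ~~ fusion i g i) ->
  fusion (N + d) g =1 fusion N g.
Proof.
elim: d => [|d IH] dead k; first by rewrite addn0.
rewrite addnS fusionS (negbTE (dead _ _)) ?andbF; last by rewrite leq_addr addnS ltnSn.
apply: IH => i /andP[Ni iNd]; apply: dead; by rewrite Ni addnS ltnS ltnW.
Qed.

Lemma infinite_stage_input m g : infinite_set (fusion m g) ->
  infinite_set (points_of (stage_input m g)).
Proof.
move=> z_inf N; have [k [Nk zk]] := z_inf (maxn N m.+1).
by exists k; move: Nk; rewrite geq_max => /andP[-> mk]; rewrite /points_of /= zk mk.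
Qed.

Definition diag (g : code) (k : nat) : bool := fusion k g k.

Lemma fusionS_diag n k g : diag g n -> n < k -> fusion n.+1 g k = Y n (stage_input n g) k.
Proof. by rewrite /diag fusionS => -> ->. Qed.

Definition stage_color (n : nat) (g : code) : bool := c n (stage_input n g).

Definition limit_color (g : code) : bool :=
  asbool (forall N, exists n, [&& N <= n, diag g n & stage_color n g]).

Definition homog_points (g : code) (k : nat) : bool :=
  diag g k && (stage_color k g == limit_color g).

Lemma borelb_stage_color n : borelb (stage_color n).
Proof.
apply: (borelb_comp (h := c n)) (c_borel n).
by apply: borelb_with_points => j; apply: borelb_and (borelb_fusion n j) (borelb_const (inr 0) _).
Qed.

Lemma borelb_limit_color : borelb limit_color.
Proof.
apply: borelb_asbool; apply: borel_forall => N; apply: borel_union => n.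
apply: borelb_and (borelb_const (inr 0) _) (borelb_and (borelb_fusion n n) (borelb_stage_color n)).
Qed.

Lemma borelb_homog_points k : borelb (homog_points^~ k).
Proof.
apply: borelb_and (borelb_fusion k k) _.
exact: borelb_eq (borelb_stage_color k) borelb_limit_color.
Qed.

Lemma homog_points_subset g k : homog_points g k -> points_of g k.
Proof. by move=> /andP[/fusion_subset0 /andP[]]. Qed.

Section InfiniteCode.
Variable g : code.
Hypothesis g_inf : infinite_set (points_of g).

Lemma fusion_infinite n : infinite_set (fusion n g).
Proof.
elim: n => [|m IH] N.
  have [k [Nk gk]] := g_inf (maxn N (\max_(a <- s) a).+1).
  move: Nk; rewrite geq_max => /andP[Nk sk]; exists k; split=> //.
  by rewrite /= gk (above_leq (above_bigmax s) sk).
case m_in: (fusion m g m); last first.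
  by have [k [Nk zk]] := IH N; exists k; rewrite fusionS m_in andbF.
have [Y_inf _] := (Y_homogenizes (fusion_above m_in)).2 _ (infinite_stage_input IH).
have [k [Nk Yk]] := Y_inf (maxn N m.+1).
by move: Nk; rewrite geq_max => /andP[Nk mk]; exists k; rewrite fusionS mk m_in.
Qed.

Lemma diag_infinite : infinite_set (diag g).
Proof.
move=> N; have [k [Nk zk]] := fusion_infinite N N.
case: (boolP (has (diag g) (iota N (k - N)))) => [/hasP[i] | /hasPn dead].
  by rewrite mem_iota => /andP[Ni _] di; exists i.
exists k; split=> //; rewrite /diag -{1}(subnKC Nk) fusion_const // => i.
by rewrite subnKC // => iN; apply: dead; rewrite mem_iota subnKC.
Qed.

Lemma homog_points_infinite : infinite_set (homog_points g).
Proof.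
rewrite /homog_points /limit_color; case: asboolP => [often | rarely] N.
  by have [n /and3P[Nn dn cn]] := often N; exists n; rewrite Nn dn cn.
have [N0 never] := not_all_ex_not _ _ rarely.
have quiet n : N0 <= n -> diag g n -> stage_color n g = false.
  by move=> N0n dn; apply/negbTE/negP => cn; apply: never; exists n; rewrite N0n dn cn.
have [n [Nn dn]] := diag_infinite (maxn N N0).
by move: Nn; rewrite geq_max => /andP[Nn N0n]; exists n; rewrite Nn dn quiet.
Qed.

Lemma homog_points_homogeneous u : ~ B s -> sorted ltn (s ++ u) -> B (s ++ u) ->
  (forall k, k \in u -> homog_points g k) -> family_of g (s ++ u) = limit_color g.
Proof.
case: u => [|n u] nBs su_sorted Bsu hu; first by rewrite cats0 in Bsu.
have /andP[dn /eqP <-] := hu n (mem_head n u).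
have [_ homog] := (Y_homogenizes (fusion_above dn)).2 _ (infinite_stage_input (fusion_infinite n)).
rewrite -cat_rcons; apply: homog; rewrite ?cat_rcons // => k ku.
have /andP[dk _] := hu k (mem_behead (s := n :: u) ku).
have nk : n < k := sorted_cat_ltn (s := [:: n]) (cat_sorted2 su_sorted).2 (mem_head n [::]) ku.
by rewrite -(fusionS_diag dn nk); apply: fusion_subset nk dk.
Qed.

End InfiniteCode.

Lemma homogenizes_homog_points : ~ B s -> homogenizes B s homog_points limit_color.
Proof.
move=> nBs; split=> [g k | g g_inf]; first exact: homog_points_subset.
by split=> [| u]; [exact: homog_points_infinite | exact: homog_points_homogeneous].
Qed.

End Fusion.

Lemma homogenizable_step B s : ~ B s ->
  (forall n, above s n -> homogenizable B (rcons s n)) -> homogenizable B s.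
Proof.
move=> nBs ext.
have /choice[Yc hYc] : forall n, exists Yc : (code -> nat -> bool) * (code -> bool),
    [/\ forall k, borelb (fun g => Yc.1 g k), borelb Yc.2 &
        above s n -> homogenizes B (rcons s n) Yc.1 Yc.2].
  move=> n; case: (boolP (above s n)) => [/ext[Y [c [Yb cb hY]]] | sn].
    by exists (Y, c).
  exists ((fun _ _ => false), (fun _ => false)).
  by split=> [k | | ]; rewrite ?(negbTE sn) //; apply: borelb_const (inr 0) false.
pose Y n := (Yc n).1; pose c n := (Yc n).2.
have Y_borel n k : borelb (fun g => Y n g k) by case: (hYc n) => + _ _; apply.
have c_borel n : borelb (c n) by case: (hYc n).
have Y_homogenizes n : above s n -> homogenizes B (rcons s n) (Y n) (c n).
  by case: (hYc n).
exists (homog_points s Y c), (limit_color s Y c); split.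
- exact: borelb_homog_points.
- exact: borelb_limit_color.
- exact: homogenizes_homog_points.
Qed.

Lemma not_homogenizable_ext B s : front B -> ~ homogenizable B s ->
  exists n, above s n /\ ~ homogenizable B (rcons s n).
Proof.
move=> hB bad_s; apply: NNPP => good_ext; apply: (bad_s); apply: homogenizable_step.
- move=> Bs; apply: bad_s; apply: homogenizable_front_prefix hB _.
  by exists s; last exact: init_seg_refl.
- by move=> n sn; apply: NNPP => bad_sn; apply: good_ext; exists n.
Qed.

Section Chain.
Variables (s0 : seq nat) (next : seq nat -> nat).

Fixpoint chain (i : nat) : seq nat :=
  if i is j.+1 then rcons (chain j) (next (chain j)) else s0.

Hypothesis next_above : forall i, above (chain i) (next (chain i)).

Lemma chain_subset i j : i <= j -> {subset chain i <= chain j}.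
Proof.
apply: (@homo_leq _ chain (fun a b => {subset a <= b})) => [a k // | a b c ab bc k /ab /bc //|].
by move=> i' k; rewrite /= mem_rcons in_cons orbC => ->.
Qed.

Lemma next_chain_ltn : {homo next \o chain : i j / i < j}.
Proof.
apply: homo_ltn => [y x z | i]; first exact: ltn_trans.
by have := allP (next_above i.+1) (next (chain i)); rewrite /= mem_rcons mem_head; apply.
Qed.

Lemma leq_next_chain i : i <= next (chain i).
Proof. by elim: i => // i IH; apply: leq_ltn_trans IH (next_chain_ltn (ltnSn i)). Qed.

Lemma chain_new i j k : i <= j -> k \in chain j -> (k \in chain i) || (next (chain i) <= k).
Proof.
move=> /subnK <-; elim: (j - i) k => [|d IH] k; first by move=> ->.
rewrite addSn /= mem_rcons in_cons => /orP[/eqP -> | /IH //].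
by rewrite (ltnW_homo next_chain_ltn (leq_addl d i)) orbT.
Qed.

(* The union of the chain: k cannot enter after stage k.+1 since next (chain i) >= i. *)
Definition chain_limit (k : nat) : bool := k \in chain k.+1.

Lemma chain_limit_infinite : infinite_set chain_limit.
Proof.
move=> N; exists (next (chain N)); split; first exact: leq_next_chain.
apply: (chain_subset (leq_next_chain N : N < (next (chain N)).+1)).
by rewrite /= mem_rcons mem_head.
Qed.

Lemma chain_limit_init_seg b : init_seg_of b chain_limit -> exists N, init_seg b (chain N).
Proof.
move=> [N bN]; exists N, N => k; rewrite bN; case: (ltnP k N) => //= kN.
apply/idP/idP => [/(chain_subset kN) // | /(chain_new kN)].
by rewrite leqNgt leq_next_chain orbF.
Qed.

End Chain.

Lemma homogenizable_all B s : front B -> homogenizable B s.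
Proof.
move=> hB; apply: NNPP => bad_s.
have /choice[next nextP] : forall t, exists n, ~ homogenizable B t ->
    above t n /\ ~ homogenizable B (rcons t n).
  move=> t; case: (classic (homogenizable B t)) => [good_t | bad_t].
    by exists 0.
  by have [n hn] := not_homogenizable_ext hB bad_t; exists n.
have bad_chain i : ~ homogenizable B (chain s next i).
  by elim: i => [//| i bad_i]; apply: (nextP _ bad_i).2.
have next_above i : above (chain s next i) (next (chain s next i)).
  exact: (nextP _ (bad_chain i)).1.
have [b [Bb b_lim]] := hB.2.2 _ (chain_limit_infinite next_above).
have [N b_N] := chain_limit_init_seg next_above b_lim.
by apply: (bad_chain N); apply: homogenizable_front_prefix hB _; exists b.
Qed.

Definition pair_code (F : seq nat -> bool) (x : nat -> bool) : code :=
  fun z => match z with inl t => F t | inr n => x n end.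

Lemma pair_code_eta g : pair_code (family_of g) (points_of g) = g.
Proof. by apply: functional_extensionality => -[]. Qed.

Theorem mainTheorem7 (B : seq nat -> Prop) (hB : front B) :
  exists S : (seq nat -> bool) -> (nat -> bool) -> (nat -> bool),
    borel_map2 S /\
    forall (x : nat -> bool) (F : seq nat -> bool),
      infinite_set x -> (forall s, F s -> B s) ->
      infinite_set (S F x) /\
      (forall k, S F x k -> x k) /\
      ((forall s, B s -> (forall k, k \in s -> S F x k) -> F s) \/
       (forall s, F s -> ~ (forall k, k \in s -> S F x k))).
Proof.
have [Y [c [Y_borel _ [Y_subset Y_homogenizes]]]] := homogenizable_all [::] hB.
exists (fun F x => Y (pair_code F x)); split.
  move=> A hA; apply: borel_preimage hA _ => k.
  by apply: borel_ext (Y_borel k) _ => g; rewrite pair_code_eta.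
move=> x F x_inf F_B; have [S_inf S_homog] := Y_homogenizes (pair_code F x) x_inf.
split=> //; split=> [k /Y_subset // | ].
have F_color t : B t -> (forall k, k \in t -> Y (pair_code F x) k) -> F t = c (pair_code F x).
  by move=> Bt; apply: S_homog (hB.1 t Bt) Bt.
case c_F: (c (pair_code F x)); [left | right] => t.
- by move=> Bt /(F_color t Bt); rewrite c_F.
- by move=> Ft /(F_color t (F_B t Ft)); rewrite c_F Ft.
Qed.
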